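(* For every integer $k\ge 6$, there exist aperiodic recurrent infinite words avoiding $(k,k-5)$-anti-powers.
   Context: A word avoids a class of words if no factor (contiguous subword) belongs to the class. A $(k,\lambda)$-anti-power is a word $w=w_1\cdots w_k$ with $|w_1|=\cdots=|w_k|\ge1$ such that $|\{i: w_i=w_j\}|\le\lambda$ for each $j\in\{1,\dots,k\}$. An infinite word is recurrent if every finite factor occurs infinitely often. An infinite word $x$ is eventually periodic if some suffix of $x$ equals $u^\omega$ for a finite word $u$; otherwise it is aperiodic. *)

From mathcomp Require Import all_boot.
Set Implicit Arguments. Unset Strict Implicit. Unset Printing Implicit Defensive.

(* Infinite words over a finite alphabet: x : nat -> nat with x i < b for all i.
   Finite words: seq nat. *)

Definition factor (x : nat -> nat) (i n : nat) : seq nat := mkseq (fun t => x (i + t)) n.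

Definition block (w : seq nat) (m j : nat) : seq nat := take m (drop (j * m) w).

Definition anti_power (k lam : nat) (w : seq nat) : Prop :=
  exists m, 0 < m /\ size w = k * m /\
    forall j, j < k ->
      count (fun i => block w m i == block w m j) (iota 0 k) <= lam.

Definition avoids_anti_powers (k lam : nat) (x : nat -> nat) : Prop :=
  forall i n, ~ anti_power k lam (factor x i n).

Definition recurrent (x : nat -> nat) : Prop :=
  forall i n N, exists j, N <= j /\ factor x j n = factor x i n.

Definition eventually_periodic (x : nat -> nat) : Prop :=
  exists p N, 0 < p /\ forall i, N <= i -> x (i + p) = x i.

Definition aperiodic (x : nat -> nat) : Prop := ~ eventually_periodic x.

From mathcomp Require Import all_boot.
From mathcomp Require Import zify.
Set Implicit Arguments. Unset Strict Implicit. Unset Printing Implicit Defensive.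

(* The witness is the characteristic word of the integers whose base-c digits
   are all 0 or 1, for c = 2k+3.  It is recurrent because x (r + c^M) = x r for
   r < c^M, and aperiodic because c^(M+1) is such an integer while c^(M+1) - p,
   whose digit at position M is c-1, is not.  For avoidance, cut a factor of
   length km into k blocks of length m and take n least with m < 2c^n.  Every
   such integer i has i mod c^(n+1) in [0, m) or [c^n, c^n + m), and two of them
   with different quotients by c^(n+1) are more than (c-3)c^n >= 2kc^n > km
   apart.  Hence the 1s of the factor lie in two runs of length m, which meet at
   most four blocks; the other k-4 > lam blocks all equal 0^m. *)

Definition digit (c j i : nat) : nat := (i %/ c ^ j) %% c.

Lemma digit_small c j i : i < c ^ j -> digit c j i = 0.
Proof. by move=> lt_i; rewrite /digit divn_small // mod0n. Qed.

Lemma digit_mulD c M d r : d < c -> r < c ^ M -> digit c M (d * c ^ M + r) = d.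
Proof.
move=> lt_d lt_r; have c_gt0 : 0 < c ^ M by rewrite expn_gt0; lia.
by rewrite /digit divnMDl // divn_small // addn0 modn_small.
Qed.

Lemma modn_exp_digit c n i :
  i %% c ^ n.+1 = digit c n i * c ^ n + i %% c ^ n.
Proof.
rewrite /digit modn_divl -expnS -(@modn_dvdm (c ^ n.+1) i (c ^ n)) -?divn_eq //.
by rewrite expnS dvdn_mull.
Qed.

Lemma leq_divn_near d e i j : j %% d < e -> i < j + (d - e) -> i %/ d <= j %/ d.
Proof.
move=> lt_j lt_i; rewrite leqNgt; apply/negP => lt_q.
have d_gt0 : 0 < d by case: d lt_q {lt_j lt_i} => //; rewrite !divn0.
have : (j %/ d).+1 * d <= i %/ d * d by rewrite leq_mul2r lt_q orbT.
have := divn_eq i d; have := divn_eq j d; have := ltn_pmod i d_gt0.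
rewrite mulSn; lia.
Qed.

Lemma block_factor (x : nat -> nat) a k m j : j < k ->
  block (factor x a (k * m)) m j = factor x (a + j * m) m.
Proof.
move=> lt_jk; have le_km : j * m + m <= k * m by rewrite -mulSnr leq_mul2r lt_jk orbT.
have size_block : size (block (factor x a (k * m)) m j) = m.
  by rewrite size_takel // size_drop size_mkseq; lia.
apply: (@eq_from_nth _ 0) => [|t]; first by rewrite size_block size_mkseq.
rewrite size_block => lt_tm.
by rewrite /block /factor nth_take // nth_drop !nth_mkseq ?addnA //; lia.
Qed.

Lemma factor_const (x : nat -> nat) a m v :
  (forall t, t < m -> x (a + t) = v) -> factor x a m = nseq m v.
Proof.
move=> const; apply: (@eq_from_nth _ 0) => [|t]; first by rewrite size_nseq size_mkseq.
by rewrite size_mkseq => lt_tm; rewrite nth_mkseq // nth_nseq lt_tm const.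
Qed.

Lemma block_index_near a m j U i : 0 < m -> U <= i < U + m ->
  a + j * m <= i < a + j * m + m -> j \in [:: (U - a) %/ m; ((U - a) %/ m).+1].
Proof.
move=> m_gt0 /andP[le_Ui lt_iU] /andP[le_ji lt_ij].
have := divn_eq (U - a) m; have := ltn_pmod (U - a) m_gt0.
set q := (U - a) %/ m => lt_r eq_U.
have le_jq : j < q.+2 by rewrite -(ltn_pmul2r m_gt0); nia.
have le_qj : q <= j by rewrite -ltnS -(ltn_pmul2r m_gt0); nia.
by rewrite !inE; apply/orP; lia.
Qed.

Lemma count_blocks_meeting_two_runs (P : pred nat) a k m B D : 0 < m ->
  (forall i, a <= i < a + k * m -> P i -> (B <= i < B + m) || (D <= i < D + m)) ->
  count (fun j => has (fun t => P (a + j * m + t)) (iota 0 m)) (iota 0 k) <= 4.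
Proof.
move=> m_gt0 runs; rewrite -size_filter.
pose L := [:: (B - a) %/ m; ((B - a) %/ m).+1] ++ [:: (D - a) %/ m; ((D - a) %/ m).+1].
apply: (@leq_trans (size L)) => //; apply: uniq_leq_size; first exact/filter_uniq/iota_uniq.
move=> j; rewrite mem_filter mem_iota add0n => /andP[/hasP[t] + Pi lt_jk].
rewrite mem_iota add0n => lt_tm.
have win : a <= a + j * m + t < a + k * m.
  have : j.+1 * m <= k * m by apply: leq_mul => //; lia.
  rewrite mulSn; lia.
have in_block : a + j * m <= a + j * m + t < a + j * m + m by lia.
by rewrite mem_cat; case/orP: (runs _ win Pi) => run;
  rewrite (block_index_near m_gt0 run in_block) ?orbT.
Qed.

Definition digits01 (c i : nat) : bool :=
  all (fun j => digit c j i <= 1) (iota 0 i.+1).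

Definition cantor_word (c i : nat) : nat := digits01 c i.

Section CantorWord.

Variable c : nat.
Hypothesis c_gt1 : 1 < c.

Lemma expn_c_gt0 n : 0 < c ^ n.
Proof. by rewrite expn_gt0; lia. Qed.

Lemma digits01P i : reflect (forall j, digit c j i <= 1) (digits01 c i).
Proof.
apply: (iffP allP) => [all_le1 j | all_le1 j _]; last exact: all_le1.
have [le_ji | lt_ij] := leqP j i; first by apply: all_le1; rewrite mem_iota.
by rewrite digit_small //; apply: ltn_trans lt_ij (ltn_expl _ _).
Qed.

Lemma digits01_digit_le1 i j : digits01 c i -> digit c j i <= 1.
Proof. by move/digits01P. Qed.

Lemma digitDexp M j r : r < c ^ M -> j != M -> digit c j (r + c ^ M) = digit c j r.
Proof.
move=> lt_r ne_jM; have [lt_jM | le_Mj] := ltnP j M.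
  have -> : c ^ M = c ^ (M - j - 1) * c * c ^ j by rewrite -expnSr -expnD; f_equal; lia.
  by rewrite /digit addnC divnMDl ?expn_c_gt0 // modnMDl.
have lt_Mj : M < j by rewrite ltn_neqAle eq_sym ne_jM.
have : c ^ M.+1 <= c ^ j by rewrite leq_pexp2l; lia.
rewrite expnSr => le_exp; rewrite !digit_small //; nia.
Qed.

Lemma digits01Dexp M r : r < c ^ M -> digits01 c (r + c ^ M) = digits01 c r.
Proof.
move=> lt_r; apply/digits01P/digits01P => le1 j; have [-> | ne_jM] := eqVneq j M.
- by rewrite digit_small.
- by rewrite -(digitDexp lt_r ne_jM).
- by rewrite addnC -[c ^ M]mul1n digit_mulD.
- by rewrite digitDexp.
Qed.

Lemma cantor_wordDexp M r : r < c ^ M -> cantor_word c (r + c ^ M) = cantor_word c r.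
Proof. by move=> lt_r; rewrite /cantor_word digits01Dexp. Qed.

Lemma cantor_word_recurrent : recurrent (cantor_word c).
Proof.
move=> i n N; set M := i + n + N.
have lt_M : M < c ^ M by exact: ltn_expl.
exists (i + c ^ M); split; first lia.
apply: (@eq_from_nth _ 0); first by rewrite /factor !size_mkseq.
move=> t; rewrite /factor size_mkseq => lt_tn; rewrite !nth_mkseq //.
by rewrite addnAC cantor_wordDexp //; lia.
Qed.

Lemma digits01_exp M : digits01 c (c ^ M).
Proof.
rewrite -[c ^ M]add0n digits01Dexp ?expn_c_gt0 //.
by apply/digits01P => j; rewrite /digit div0n mod0n.
Qed.

Lemma digits01_modn_lt n i : digits01 c i -> i %% c ^ n.+1 < 2 * c ^ n.
Proof.
move/(digits01_digit_le1 n) => le1; rewrite modn_exp_digit.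
have := ltn_pmod i (expn_c_gt0 n); nia.
Qed.

Lemma digits01_scale m : 0 < m ->
  exists n, m < 2 * c ^ n /\ forall i, digits01 c i -> i %% c ^ n < m.
Proof.
move=> m_gt0; have ex_n : exists n, m < 2 * c ^ n.
  by exists m; have := ltn_expl m c_gt1; lia.
case: (ex_minnP ex_n) => n lt_m minimal; exists n; split=> // i one.
case: n lt_m minimal => [|n] _ minimal; first by rewrite expn0 modn1.
have le_m : 2 * c ^ n <= m by rewrite leqNgt; apply/negP => /minimal; rewrite ltnn.
by have := digits01_modn_lt n one; lia.
Qed.

End CantorWord.

Lemma cantor_word_aperiodic c : 2 < c -> aperiodic (cantor_word c).
Proof.
move=> c_gt2 [p [N [p_gt0 periodic]]]; set M := N + p.
have lt_M : M < c ^ M by apply: ltn_expl; lia.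
set i := c ^ M.+1 - p.
have le_Ni : N <= i by rewrite /i expnSr; nia.
have word_ip : cantor_word c (i + p) = 1.
  have le_p : p <= c ^ M.+1 by rewrite expnSr; nia.
  by rewrite /i subnK // /cantor_word digits01_exp //; lia.
have word_i : cantor_word c i = 0.
  have -> : i = (c - 1) * c ^ M + (c ^ M - p).
    by rewrite /i mulnBl mul1n expnS; nia.
  apply/eqP; rewrite eqb0; apply/(digits01P _)=> [|le1]; first lia.
  by have := le1 M; rewrite digit_mulD; lia.
by have := periodic i le_Ni; rewrite word_ip word_i.
Qed.

Lemma digits01_two_runs c k a m : 2 * k + 3 <= c -> 0 < m ->
  exists B D, forall i, a <= i < a + k * m -> digits01 c i ->
    (B <= i < B + m) || (D <= i < D + m).
Proof.
move=> le_c m_gt0; have c_gt1 : 1 < c by lia.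
have [n [lt_m small]] := digits01_scale c_gt1 m_gt0.
have near i : digits01 c i -> i %% c ^ n.+1 < c ^ n + m.
  move=> one; have := small i one; have := digits01_digit_le1 c_gt1 n one.
  by rewrite modn_exp_digit; nia.
have [/hasP[i1] | none] := boolP (has (digits01 c) (iota a (k * m))); last first.
  exists 0, 0 => i win one; case/hasP: none; exists i => //.
  by rewrite mem_iota.
rewrite mem_iota => win1 one1; set B := i1 %/ c ^ n.+1 * c ^ n.+1.
exists B, (B + c ^ n) => i win one.
have same_q : i %/ c ^ n.+1 = i1 %/ c ^ n.+1.
  have le_km : k * m <= k * (2 * c ^ n) by rewrite leq_mul2l ltnW ?orbT.
  have gap : c ^ n * (2 * k + 3) <= c ^ n.+1 by rewrite expnSr leq_mul2l le_c orbT.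
  by apply/eqP; rewrite eqn_leq !(leq_divn_near (e := c ^ n + m)) ?near //; nia.
have := divn_eq i (c ^ n.+1); rewrite modn_exp_digit same_q -/B.
have := small i one; have := digits01_digit_le1 c_gt1 n one.
by case: (digit c n i) => [|[|]] //; lia.
Qed.

Lemma cantor_word_avoids c k lam : 2 * k + 3 <= c -> lam + 4 < k ->
  avoids_anti_powers k lam (cantor_word c).
Proof.
move=> le_c lt_lam a n [m [m_gt0 [+ distinct]]]; rewrite size_mkseq => eq_n.
subst n; set w := factor _ a (k * m) in distinct.
have [B [D runs]] := digits01_two_runs a le_c m_gt0.
pose nonzero j := has (fun t => digits01 c (a + j * m + t)) (iota 0 m).
pose zero j := (j < k) && ~~ nonzero j.
have zero_block j : zero j -> block w m j = nseq m 0.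
  case/andP=> lt_jk /hasPn zero_t; rewrite block_factor // (factor_const (v := 0)) // => t lt_tm.
  by apply/eqP; rewrite eqb0 zero_t // mem_iota.
have many_zero : lam < count zero (iota 0 k).
  have -> : count zero (iota 0 k) = count (predC nonzero) (iota 0 k).
    by apply: eq_in_count => j; rewrite mem_iota /zero /= => ->.
  have few_nonzero : count nonzero (iota 0 k) <= 4.
    exact: count_blocks_meeting_two_runs m_gt0 runs.
  by have := count_predC nonzero (iota 0 k); rewrite size_iota; lia.
have /hasP[j0 _ zero_j0] : has zero (iota 0 k) by rewrite has_count; lia.
have := distinct j0 (andP zero_j0).1.
have : count zero (iota 0 k) <= count (fun j => block w m j == block w m j0) (iota 0 k).
  by apply: sub_count => j zero_j; rewrite /= !zero_block.
lia.
Qed.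

Theorem theorem4p6 : forall k : nat, 6 <= k ->
  exists (b : nat) (x : nat -> nat),
    (forall i, x i < b) /\
    aperiodic x /\ recurrent x /\ avoids_anti_powers k (k - 5) x.
Proof.
move=> k k_ge6; exists 2, (cantor_word (2 * k + 3)).
split; first by move=> i; rewrite ltnS leq_b1.
split; first by apply: cantor_word_aperiodic; lia.
split; first by apply: cantor_word_recurrent; lia.
by apply: cantor_word_avoids; lia.
Qed.
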